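(* For any integer $k\ge1$, no online algorithm achieves a competitive ratio better than $2\ln2$ for the online ATWC dispersion problem without boundary condition for arbitrary $k$-dimensional polytopes; i.e., there is no online algorithm that is $\sigma$-competitive with $\sigma<2\ln2$ for every $k$-dimensional polytope $P$.
   Context: Distances are Euclidean. For a polytope $P$ and $n\ge2$, $SP(n;P)=\max_{X_1,\dots,X_n\in P}\min_{i\ne j}dis(X_i,X_j)$. An instance is $S=((s_1,d_1),\dots,(s_n,d_n))$ with $s_i<d_i$, $0=s_1\le\dots\le s_n$; point $i$ is present at time $t$ iff $s_i\le t\le d_i$; $T=\max_id_i$. For $X\in P^n$, $d^{SP}_{min}(t;X)=\min dis(X_i,X_j)$ over present points $i\ne j$ at time $t$, and $OPT^{SP}_A(S;P)=\max_X\min_{t\le T}d^{SP}_{min}(t;X)$. In the online problem, upon arrival of each point the algorithm irrevocably chooses its location in $P$ without knowing future events or the number of points; an adaptive adversary chooses the events. An online algorithm is $\sigma$-competitive for $P$ if $OPT^{SP}_A(S;P)\le\sigma\min_{t\le T}d^{SP}_{min}(t;X)$ for every instance $S$ and its output $X$. *)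

From HB Require Import structures.
From mathcomp Require Import all_boot all_order all_algebra.
From mathcomp Require Import all_classical all_reals all_analysis.
Set Implicit Arguments. Unset Strict Implicit. Unset Printing Implicit Defensive.
Import Order.TTheory GRing.Theory Num.Theory.
Local Open Scope classical_set_scope.
Local Open Scope ring_scope.

Section Dispersion.
Variables (R : realType) (k : nat).

Definition edist (x y : 'rV[R]_k) : R :=
  Num.sqrt (\sum_(i < k) (x ord0 i - y ord0 i) ^+ 2).

Definition hull (V : seq 'rV[R]_k) : set 'rV[R]_k :=
  [set x | exists w : 'I_(size V) -> R,
     (forall i, 0 <= w i) /\ \sum_i w i = 1 /\
     x = \sum_i w i *: nth 0 V i].

(* conv(V) is k-dimensional (full-dimensional in R^k): it contains a ball *)
Definition full_dim (V : seq 'rV[R]_k) : Prop :=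
  exists (c : 'rV[R]_k) (r : R), 0 < r /\
    forall x, edist x c < r -> hull V x.

Definition instance := seq (R * R).
Definition arr (S : instance) (i : nat) : R := (nth (0, 0) S i).1.
Definition dep (S : instance) (i : nat) : R := (nth (0, 0) S i).2.

Definition valid_instance (S : instance) : Prop :=
  (2 <= size S)%N /\ arr S 0 = 0 /\
  (forall i, (i < size S)%N -> arr S i < dep S i) /\
  (forall i j, (i <= j)%N -> (j < size S)%N -> arr S i <= arr S j).

Definition horizon (S : instance) : R := \big[Num.max/0]_(i < size S) dep S i.

Definition present (S : instance) (i : nat) (t : R) : bool :=
  (arr S i <= t) && (t <= dep S i).

(* d^SP_min(t;X): min over present pairs (+oo if fewer than two present) *)
Definition dmin (S : instance) (X : 'I_(size S) -> 'rV[R]_k) (t : R) : \bar R :=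
  \big[Order.min/+oo%E]_(i < size S)
    \big[Order.min/+oo%E]_(j < size S | (i != j) && present S i t && present S j t)
       (edist (X i) (X j))%:E.

Arguments dmin : clear implicits.

Definition objective (S : instance) (X : 'I_(size S) -> 'rV[R]_k) : \bar R :=
  ereal_inf [set dmin S X t | t in [set t : R | t <= horizon S]].

Arguments objective : clear implicits.

Definition OPT (S : instance) (P : set 'rV[R]_k) : \bar R :=
  ereal_sup [set objective S X |
     X in [set X : 'I_(size S) -> 'rV[R]_k | forall i, P (X i)]].

(* Information available to the online algorithm when point i arrives:
   the arrival times s_0..s_i, and for each earlier point j < i its
   departure time if it has already occurred (d_j <= s_i), else None.
   Neither the future events nor the number of points n are revealed. *)
Definition history (S : instance) (i : nat) : seq (R * option R) :=
  [seq (arr S j, if (j < i)%N && (dep S j <= arr S i) then Some (dep S j) else None)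
  | j <- iota 0 i.+1].

Definition online_alg (P : set 'rV[R]_k) (alg : instance -> nat -> 'rV[R]_k) : Prop :=
  (forall S i, (i < size S)%N -> P (alg S i)) /\
  (forall S S' i, (i < size S)%N -> (i < size S')%N ->
     history S i = history S' i -> alg S i = alg S' i).

Definition output (alg : instance -> nat -> 'rV[R]_k) (S : instance)
  : 'I_(size S) -> 'rV[R]_k := fun i => alg S i.

Arguments output : clear implicits.

Definition competitive (P : set 'rV[R]_k) (alg : instance -> nat -> 'rV[R]_k)
  (sigma : R) : Prop :=
  forall S, valid_instance S ->
    (OPT S P <= sigma%:E * objective S (output alg S))%E.

End Dispersion.

(* The adversary lets points arrive one by one at time 0, all
   leaving at time 1.  For point i the online algorithm sees the same history
   whatever the total number n > i of points, so it commits to a single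
   sequence x_0, x_1, ...  Stopped after n points, the offline optimum in a
   polytope containing a unit segment is at least 1/(n-1); hence
   sigma-competitiveness forces dist(x_i, x_j) >= 1/(sigma max(i,j)).  In a
   simplex of length 1 and thickness eps this separation survives, up to an
   error O(eps), the projection onto its long axis.  Sorting 2N+1 such points of
   [0, 1], each index is the larger end of at most two of the 2N gaps, so
   1 >= 2 sum_{a=N+1}^{2N} 1/(sigma a) >= 2 (ln 2 - 1/(2N+1)) / sigma.
   Letting eps -> 0 and N -> oo gives sigma >= 2 ln 2. *)

From HB Require Import structures.
From mathcomp Require Import all_boot all_order all_algebra.
From mathcomp Require Import zify ring lra.
From mathcomp Require Import all_classical all_reals all_analysis.
Set Implicit Arguments.
Unset Strict Implicit.
Unset Printing Implicit Defensive.
Import Order.TTheory GRing.Theory Num.Theory.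
Local Open Scope ring_scope.

Section EuclideanGeometry.
Variables (R : realType) (k : nat).
Implicit Types (x y : 'rV[R]_k) (V : seq 'rV[R]_k).

Lemma edist_ge0 x y : 0 <= edist x y.
Proof. exact: sqrtr_ge0. Qed.

Lemma normB_coord_le_edist x y i : `|x ord0 i - y ord0 i| <= edist x y.
Proof.
rewrite /edist -sqrtr_sqr ler_sqrt; last by apply: sumr_ge0 => l _; exact: sqr_ge0.
by rewrite (bigD1 i) //= lerDl; apply: sumr_ge0 => l _; exact: sqr_ge0.
Qed.

Lemma edist_le_sum_normB x y : edist x y <= \sum_i `|x ord0 i - y ord0 i|.
Proof.
have sum_ge0 : 0 <= \sum_i `|x ord0 i - y ord0 i| by apply: sumr_ge0.
rewrite /edist -(ger0_norm sum_ge0) -sqrtr_sqr ler_sqrt ?sqr_ge0 //.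
rewrite expr2 mulr_suml; apply: ler_sum => i _.
rewrite -real_normK ?num_real // expr2 ler_wpM2l //.
by rewrite (bigD1 i) //= lerDl; apply: sumr_ge0.
Qed.

Lemma hull_coord_bound V i a b x :
  (forall v, v \in V -> a <= v ord0 i <= b) -> hull V x -> a <= x ord0 i <= b.
Proof.
move=> hV [w [w_ge0 [w_sum1 ->]]].
have hVj (j : 'I_(size V)) := hV _ (mem_nth 0 (ltn_ord j)).
rewrite summxE; apply/andP; split.
- apply: (@le_trans _ _ (\sum_j w j * a)); first by rewrite -mulr_suml w_sum1 mul1r.
  apply: ler_sum => j _; rewrite mxE ler_wpM2l //.
  by case/andP: (hVj j).
- apply: (@le_trans _ _ (\sum_j w j * b)); last by rewrite -mulr_suml w_sum1 mul1r.
  apply: ler_sum => j _; rewrite mxE ler_wpM2l //.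
  by case/andP: (hVj j).
Qed.

Lemma mem_hull_cons0_mkseq n (f : nat -> 'rV[R]_k) (w : nat -> R) :
  (forall l, (l < n)%N -> 0 <= w l) -> \sum_(l < n) w l <= 1 ->
  hull (0 :: mkseq f n) (\sum_(l < n) w l *: f l).
Proof.
move=> w_ge0 w_sum; rewrite /hull /= size_mkseq.
exists (fun i : 'I_n.+1 => if i : nat is l.+1 then w l else 1 - \sum_(l < n) w l).
split; first by case=> [[|l] /= lt_ln]; rewrite ?subr_ge0 ?w_ge0.
split; first by rewrite big_ord_recl /= subrK.
rewrite big_ord_recl scaler0 add0r; apply: eq_bigr => l _.
by rewrite lift0 /= nth_mkseq.
Qed.

End EuclideanGeometry.

Lemma sumr_comp_count (V : nmodType) (T I : eqType) (f : T -> I) (F : I -> V)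
    (s : seq T) (r : seq I) :
  uniq r -> (forall t, t \in s -> f t \in r) ->
  \sum_(t <- s) F (f t) = \sum_(a <- r) F a *+ count (fun t => f t == a) s.
Proof.
move=> r_uniq; elim: s => [_|t s IHs fs_r]; first by rewrite big_nil big1.
rewrite big_cons IHs => [|u su]; last by apply: fs_r; rewrite inE su orbT.
under [RHS]eq_bigr do rewrite /= mulrnDr.
rewrite big_split /=; congr (_ + _).
rewrite (bigD1_seq (f t)) ?fs_r ?mem_head //= eqxx mulr1n.
by rewrite big1 ?addr0 // => a; rewrite eq_sym => /negPf ->.
Qed.

Lemma count_adjacent_mem_le2 (T : eqType) (x0 a : T) (s : seq T) n :
  uniq s -> (n < size s)%N ->
  (count (fun k => (nth x0 s k == a) || (nth x0 s k.+1 == a)) (iota 0 n) <= 2)%N.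
Proof.
move=> s_uniq lt_ns; set p := index a s.
have at_p k : (k < size s)%N -> nth x0 s k == a -> k == p.
  by move=> lt_ks /eqP nth_a; rewrite /p -nth_a index_uniq.
set P := fun k => _ || _.
pose Q := predU (pred1 p) (fun k => k.+1 == p).
have -> : count P (iota 0 n) = count (predI P Q) (iota 0 n).
  apply: eq_in_count => k; rewrite mem_iota add0n => lt_kn /=.
  have lt_ks : (k < size s)%N by lia.
  have lt_Sks : (k.+1 < size s)%N by lia.
  case Pk: (P k) => //=.
  by case/orP: Pk => [/(at_p _ lt_ks)-> // | /(at_p _ lt_Sks)->]; rewrite orbT.
have le_PQ : subpred (predI P Q) Q by move=> k /andP[].
apply: leq_trans (sub_count le_PQ _) _.
have count_Q : (count Q (iota 0 n) <= count_mem p (iota 0 n) + count_mem p (iota 1 n))%N.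
  by rewrite (iotaDl 1 0) count_map -count_predUI leq_addr.
apply: leq_trans count_Q _.
by rewrite !count_uniq_mem ?iota_uniq // (leq_add (leq_b1 _) (leq_b1 _)).
Qed.

Lemma bathtub_sum_ge (R : realDomainType) (m n : nat) (b : R) (c h : nat -> R) :
  (forall a, 0 <= c a <= b) -> \sum_(0 <= a < m + n) c a = b *+ n ->
  (forall a a', (a <= a')%N -> h a' <= h a) ->
  b * \sum_(m <= a < m + n) h a <= \sum_(0 <= a < m + n) c a * h a.
Proof.
move=> c_bound c_sum h_anti.
pose cs a := if (m <= a)%N then b else 0.
have cs_weight F : \sum_(0 <= a < m + n) cs a * F a = b * \sum_(m <= a < m + n) F a.
  rewrite (big_cat_nat (n := m)) ?leq_addr //= big_nat_cond big1 ?add0r; last first.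
    by move=> a /andP[/andP[_ lt_am] _]; rewrite /cs leqNgt lt_am mul0r.
  rewrite mulr_sumr big_nat_cond [RHS]big_nat_cond; apply: eq_bigr.
  by move=> a /andP[/andP[le_ma _] _]; rewrite /cs le_ma.
have cs_sum : \sum_(0 <= a < m + n) cs a = b *+ n.
  under eq_bigr do rewrite -[cs _]mulr1.
  by rewrite cs_weight sumr_const_nat addKn mulr_natr.
rewrite -cs_weight -subr_ge0 -sumrB.
have -> : \sum_(0 <= a < m + n) (c a * h a - cs a * h a) =
    \sum_(0 <= a < m + n) (c a - cs a) * (h a - h m)
    + h m * (\sum_(0 <= a < m + n) c a - \sum_(0 <= a < m + n) cs a).
  by rewrite mulrBr !mulr_sumr -!sumrB -big_split; apply: eq_bigr => a _ /=; ring.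
rewrite c_sum cs_sum subrr mulr0 addr0; apply: sumr_ge0 => a _.
have /andP[c_ge0 c_le] := c_bound a.
rewrite /cs; case: leqP => [le_ma | lt_am].
- by rewrite mulr_le0 // subr_le0 // h_anti.
- by rewrite subr0 mulr_ge0 // subr_ge0 h_anti // ltnW.
Qed.

Lemma interval_packing (R : realDomainType) (N : nat) (lo hi : R) (y h : nat -> R) :
  (forall a a', (a <= a')%N -> h a' <= h a) ->
  (forall i, (i <= 2 * N)%N -> lo <= y i <= hi) ->
  (forall i j, (i <= 2 * N)%N -> (j <= 2 * N)%N -> i != j ->
     h (maxn i j) <= `|y i - y j|) ->
  2 * \sum_(N.+1 <= a < (2 * N).+1) h a <= hi - lo.
Proof.
move=> h_anti y_range y_sep.
pose s := sort (fun i j => y i <= y j) (iota 0 (2 * N).+1).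
have s_perm : perm_eq s (iota 0 (2 * N).+1) by rewrite perm_sort.
have s_uniq : uniq s by rewrite (perm_uniq s_perm) iota_uniq.
have s_size : size s = (2 * N).+1 by rewrite size_sort size_iota.
have s_sorted : sorted (fun i j => y i <= y j) s.
  by apply: sort_sorted => i j; exact: le_total.
have s_le k : (k <= 2 * N)%N -> (nth 0%N s k <= 2 * N)%N.
  move=> le_k; have : nth 0%N s k \in iota 0 (2 * N).+1.
    by rewrite -(perm_mem s_perm) mem_nth // s_size.
  by rewrite mem_iota.
pose m k := maxn (nth 0%N s k) (nth 0%N s k.+1).
have gaps : \sum_(0 <= k < 2 * N) h (m k) <= hi - lo.
  have tele : \sum_(0 <= k < 2 * N) (y (nth 0%N s k.+1) - y (nth 0%N s k)) <= hi - lo.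
    rewrite (telescope_sumr (fun k => y (nth 0%N s k))) //.
    have /andP[_ y_last] := y_range _ (s_le _ (leqnn _)).
    have /andP[y_first _] := y_range _ (s_le _ (leq0n _)).
    lra.
  apply: le_trans tele; apply: ler_sum_nat => k /andP[_ lt_k].
  have le_yk : y (nth 0%N s k) <= y (nth 0%N s k.+1).
    by apply: (sortedP 0 s_sorted); rewrite s_size.
  have ne_k : nth 0%N s k != nth 0%N s k.+1 by rewrite nth_uniq ?s_size //; lia.
  rewrite -[X in _ <= X]ger0_norm ?subr_ge0 // distrC.
  by apply: y_sep => //; apply: s_le; lia.
pose c a := (count (fun k => m k == a) (index_iota 0 (2 * N)))%:R : R.
have fibers F : \sum_(0 <= k < 2 * N) F (m k) = \sum_(0 <= a < (2 * N).+1) c a * F a.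
  rewrite (sumr_comp_count (f := m) F (r := index_iota 0 (2 * N).+1)) ?iota_uniq //; last first.
    by move=> k; rewrite !mem_index_iota /m gtn_max !ltnS => /andP[_ lt_k]; rewrite !s_le //; lia.
  by apply: eq_bigr => a _; rewrite mulr_natl.
have c_bound a : 0 <= c a <= 2.
  rewrite ler0n ler_nat /index_iota subn0.
  apply: leq_trans (count_adjacent_mem_le2 0%N a s_uniq (_ : 2 * N < size s)%N); last by rewrite s_size.
  by apply: sub_count => k; rewrite /m /maxn; case: ltnP => _ ->; rewrite ?orbT.
have c_sum : \sum_(0 <= a < N.+1 + N) c a = 2 *+ N.
  have -> : (N.+1 + N = (2 * N).+1)%N by lia.
  under eq_bigr do rewrite -[c _]mulr1.
  by rewrite -(fibers (fun=> 1)) sumr_const_nat subn0 mulrnA.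
have := bathtub_sum_ge c_bound c_sum h_anti.
have -> : (N.+1 + N = (2 * N).+1)%N by lia.
by rewrite -fibers => /le_trans; apply.
Qed.

Lemma natr_normB_ge1 (R : realDomainType) (i j : nat) : i != j -> 1 <= `|i%:R - j%:R : R|.
Proof.
have lt_ge1 m n : (m < n)%N -> 1 <= `|m%:R - n%:R : R|.
  by move=> lt_mn; rewrite distrC -(natrB _ (ltnW lt_mn)) normr_nat ler1n subn_gt0.
case: (ltngtP i j) => [/lt_ge1 // | /lt_ge1 | //].
by rewrite distrC.
Qed.

Lemma ler_of_le_add_mul_small (R : realFieldType) (x y c : R) :
  (forall e, 0 < e <= 1 -> x <= y + c * e) -> x <= y.
Proof.
move=> x_le; apply/ler_addgt0Pr => e e_gt0.
have c1_gt0 : 0 < `|c| + 1 by rewrite ltr_pwDr.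
pose d := Num.min 1 (e / (`|c| + 1)).
have d_gt0 : 0 < d by rewrite lt_min ltr01 divr_gt0.
apply: le_trans (x_le d _) _; first by rewrite d_gt0 ge_min lexx.
rewrite lerD2l (le_trans (ler_norm _)) // normrM (gtr0_norm d_gt0).
apply: le_trans (_ : `|c| * (e / (`|c| + 1)) <= e).
  by rewrite ler_wpM2l // ge_min lexx orbT.
by rewrite mulrCA ger_pMr // ler_pdivrMr // mul1r lerDl.
Qed.

Section Harmonic.
Variable R : realType.

Lemma ln_succ_sub_le (x : R) : 0 < x -> ln (x + 1) - ln x <= x^-1.
Proof.
move=> x_gt0.
have -> : x + 1 = x * (1 + x^-1) by rewrite mulrDr mulr1 mulfV ?gt_eqF.
rewrite lnM ?posrE ?addr_gt0 ?invr_gt0 // addrC addKr le_ln1Dx //.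
by rewrite (@lt_trans _ _ 0) ?ltrN10 ?invr_gt0.
Qed.

Lemma harmonic_block_ge N :
  ln 2 <= \sum_(N.+1 <= a < (2 * N).+1) a%:R^-1 + ((2 * N).+1%:R)^-1 :> R.
Proof.
have step a : (0 < a)%N -> ln (a.+1%:R) - ln a%:R <= a%:R^-1 :> R.
  by move=> a_gt0; rewrite -natr1 ln_succ_sub_le ?ltr0n.
have tele : ln ((2 * N).+1%:R) - ln (N.+1%:R) <= \sum_(N.+1 <= a < (2 * N).+1) a%:R^-1 :> R.
  rewrite -(telescope_sumr (fun a => ln (a%:R : R))); last by lia.
  by apply: ler_sum_nat => a /andP[lt_Na _]; apply: step; lia.
have ln2 : ln 2 = ln ((2 * N).+2%:R) - ln (N.+1%:R) :> R.
  rewrite (_ : (2 * N).+2 = 2 * N.+1)%N ?natrM ?lnM ?posrE ?ltr0n //; first by rewrite addrK.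
  by lia.
have := step (2 * N).+1 isT; move: tele ln2.
set S := \sum_(_ <= _ < _) _; set D := _^-1; lra.
Qed.

End Harmonic.

Section Instances.
Variable R : realType.

Lemma horizon_ge0 (S : instance R) : 0 <= horizon S.
Proof. by rewrite /horizon; elim/big_rec: _ => // i x _ x_ge0; rewrite le_max x_ge0 orbT. Qed.

Definition batch (n : nat) : instance R := nseq n (0, 1).

Lemma size_batch n : size (batch n) = n.
Proof. exact: size_nseq. Qed.

Lemma arr_batch n i : arr (batch n) i = 0.
Proof. by rewrite /arr nth_nseq; case: ifP. Qed.

Lemma dep_batch n i : (i < n)%N -> dep (batch n) i = 1.
Proof. by rewrite /dep nth_nseq => ->. Qed.

Lemma batch_valid n : (2 <= n)%N -> valid_instance (batch n).
Proof.
move=> n_ge2; split; first by rewrite size_batch.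
split; first exact: arr_batch.
split; last by move=> i j _ _; rewrite !arr_batch.
by move=> i; rewrite size_batch => /dep_batch ->; rewrite arr_batch ltr01.
Qed.

Lemma present_batch n i : (i < n)%N -> present (batch n) i 0.
Proof. by move=> lt_in; rewrite /present arr_batch dep_batch // lexx ler01. Qed.

Lemma history_batch n n' i :
  (i < n)%N -> (i < n')%N -> history (batch n) i = history (batch n') i.
Proof.
move=> lt_in lt_in'; apply/eq_in_map => j; rewrite mem_iota add0n ltnS => le_ji.
by rewrite !arr_batch !dep_batch //; apply: leq_ltn_trans le_ji _.
Qed.

End Instances.

Section Objective.
Variables (R : realType) (k : nat).
Implicit Types (S : instance R) (P : set 'rV[R]_k).

Lemma objective_ge S (X : 'I_(size S) -> 'rV[R]_k) (c : R) :
  (forall i j, i != j -> c <= edist (X i) (X j)) -> (c%:E <= objective X)%E.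
Proof.
move=> X_sep; apply/ereal_infP => _ [t _ <-].
apply: le_bigmin => [|i _]; first exact: leey.
apply: le_bigmin => [|j /andP[/andP[ne_ij _] _]]; first exact: leey.
by rewrite lee_fin X_sep.
Qed.

Lemma objective_le S (X : 'I_(size S) -> 'rV[R]_k) (i j : 'I_(size S)) t :
  i != j -> present S i t -> present S j t -> t <= horizon S ->
  (objective X <= (edist (X i) (X j))%:E)%E.
Proof.
move=> ne_ij i_t j_t le_tT; apply: ge_ereal_inf; exists (dmin X t); first by exists t.
apply: le_trans (bigmin_le _ i _) _.
by apply: bigmin_le_cond; rewrite ne_ij i_t j_t.
Qed.

Lemma OPT_batch_ge P (u : 'rV[R]_k) i0 n :
  u ord0 i0 = 1 -> (forall t, 0 <= t <= 1 -> P (t *: u)) -> (2 <= n)%N ->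
  (((n.-1)%:R^-1)%:E <= OPT (batch R n) P)%E.
Proof.
move=> u_i0 segP n_ge2.
have n1_gt0 : (0 : R) < (n.-1)%:R by rewrite ltr0n; lia.
pose Y (i : 'I_(size (batch R n))) := ((i : nat)%:R / (n.-1)%:R) *: u.
apply: le_ereal_sup_tmp; exists (objective Y).
  exists Y => // i; apply: segP; rewrite divr_ge0 //= ler_pdivrMr // mul1r ler_nat.
  by have := ltn_ord i; rewrite {2}size_batch; lia.
apply: objective_ge => i j ne_ij.
apply: le_trans (normB_coord_le_edist (Y i) (Y j) i0).
rewrite !mxE u_i0 !mulr1 -mulrBl normrM [`|_^-1|]ger0_norm ?invr_ge0 //.
rewrite ler_peMl ?invr_ge0 //.
exact: natr_normB_ge1.
Qed.

Lemma online_batch_sep P alg sigma M i j :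
  online_alg P alg -> competitive P alg sigma ->
  (forall n, (2 <= n)%N -> (((n.-1)%:R^-1)%:E <= OPT (batch R n) P)%E) ->
  (i < M)%N -> (j < M)%N -> i != j ->
  (maxn i j)%:R^-1 <= sigma * edist (alg (batch R M) i) (alg (batch R M) j).
Proof.
move=> [_ alg_online] alg_comp OPT_ge lt_iM lt_jM ne_ij.
pose n := (maxn i j).+1.
have n_ge2 : (2 <= n)%N by rewrite /n; move: ne_ij => /eqP; lia.
have lt_in : (i < n)%N by rewrite ltnS leq_maxl.
have lt_jn : (j < n)%N by rewrite ltnS leq_maxr.
have same_point l : (l < n)%N -> alg (batch R n) l = alg (batch R M) l.
  have le_nM : (n <= M)%N by rewrite /n gtn_max lt_iM lt_jM.
  move=> lt_ln; have lt_lM : (l < M)%N := leq_trans lt_ln le_nM.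
  by apply: alg_online; rewrite ?size_batch //; apply: history_batch.
pose X := output alg (S := batch R n).
have obj_le : (objective X <= (edist (alg (batch R M) i) (alg (batch R M) j))%:E)%E.
  rewrite -!same_point //.
  have [lt_in' lt_jn'] : (i < size (batch R n))%N /\ (j < size (batch R n))%N.
    by rewrite size_batch.
  by apply: (objective_le X (i := Ordinal lt_in') (j := Ordinal lt_jn') (t := 0));
    rewrite ?horizon_ge0 ?present_batch.
have obj_ge0 : (0 <= objective X)%E by apply: objective_ge => *; exact: edist_ge0.
have := le_trans (OPT_ge n n_ge2) (alg_comp _ (batch_valid R n_ge2)).
rewrite /n /= => OPT_le.
have [sigma_ge0|sigma_lt0] := leP 0 sigma.
  by rewrite -lee_fin EFinM (le_trans OPT_le) // lee_wpmul2l ?lee_fin.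
have sigma_le0 : (sigma%:E <= 0)%E by rewrite lee_fin ltW.
have := le_trans OPT_le (mule_le0_ge0 sigma_le0 obj_ge0).
rewrite lee_fin leNgt invr_gt0 ltr0n => /negP[].
by move: ne_ij => /eqP; lia.
Qed.

Lemma online_competitive_gt0 P alg sigma :
  online_alg P alg -> competitive P alg sigma ->
  (forall n, (2 <= n)%N -> (((n.-1)%:R^-1)%:E <= OPT (batch R n) P)%E) ->
  0 < sigma.
Proof.
move=> alg_online alg_comp OPT_ge.
have := online_batch_sep (M := 2) (i := 0) (j := 1) alg_online alg_comp OPT_ge isT isT isT.
rewrite /= invr1 => one_le; rewrite ltNge; apply/negP => sigma_le0.
have := mulr_le0_ge0 sigma_le0 (edist_ge0 (alg (batch R 2) 0) (alg (batch R 2) 1)).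
lra.
Qed.

End Objective.

Section ThinSimplex.
Variables (R : realType) (k : nat) (eps : R).
Hypothesis eps_gt0 : 0 < eps.

Definition thin_scale (l : nat) : R := if l == 0%N then 1 else eps.

Definition thin_vertex (l : nat) : 'rV[R]_k.+1 := \row_i ((l == i)%:R * thin_scale l).

Definition thin_simplex : seq 'rV[R]_k.+1 := 0 :: mkseq thin_vertex k.+1.

Lemma thin_scale_gt0 l : 0 < thin_scale l.
Proof. by rewrite /thin_scale; case: ifP. Qed.

Lemma thin_simplex_coord0 v : v \in thin_simplex -> 0 <= v ord0 ord0 <= 1.
Proof.
rewrite inE => /predU1P[-> | /mapP[l _ ->]]; first by rewrite mxE lexx ler01.
by rewrite mxE /thin_scale; case: l => [|l] /=; rewrite ?mulr1 ?mul0r lexx ler01.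
Qed.

Lemma thin_simplex_coordS (i : 'I_k) v :
  v \in thin_simplex -> 0 <= v ord0 (lift ord0 i) <= eps.
Proof.
rewrite inE => /predU1P[-> | /mapP[l _ ->]]; first by rewrite mxE lexx ltW.
rewrite mxE lift0 /thin_scale; case: eqP => [-> | _] /=; last by rewrite mul0r lexx ltW.
by rewrite mul1r ltW ?lexx.
Qed.

Lemma thin_simplex_edist_le x y :
  hull thin_simplex x -> hull thin_simplex y ->
  edist x y <= `|x ord0 ord0 - y ord0 ord0| + k%:R * eps.
Proof.
move=> x_in y_in; apply: le_trans (edist_le_sum_normB x y) _.
rewrite big_ord_recl lerD2l -[k in k%:R](card_ord k) mulr_natl -sumr_const.
apply: ler_sum => i _.
have /andP[x_ge0 x_le] := hull_coord_bound (thin_simplex_coordS i) x_in.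
have /andP[y_ge0 y_le] := hull_coord_bound (thin_simplex_coordS i) y_in.
rewrite ler_norml; apply/andP; split; lra.
Qed.

Lemma thin_vertex0_coord0 : thin_vertex 0 ord0 ord0 = 1.
Proof. by rewrite mxE mulr1. Qed.

Lemma segment_in_thin_simplex t : 0 <= t <= 1 -> hull thin_simplex (t *: thin_vertex 0).
Proof.
move=> /andP[t_ge0 t_le1].
pose w l := if l == 0%N then t else 0.
have -> : t *: thin_vertex 0 = \sum_(l < k.+1) w l *: thin_vertex l.
  by rewrite big_ord_recl big1 ?addr0 // => l _; rewrite /w /= scale0r.
apply: mem_hull_cons0_mkseq => [l _|]; first by rewrite /w; case: ifP.
by rewrite big_ord_recl big1 ?addr0 // => l _.
Qed.

Lemma thin_simplex_full_dim : eps <= 1 -> full_dim thin_simplex.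
Proof.
move=> eps_le1.
have k1_gt0 : (0 : R) < k.+1%:R by rewrite ltr0n.
pose r := eps / (4 * k.+1%:R).
have r_gt0 : 0 < r by rewrite divr_gt0 // mulr_gt0.
exists (const_mx (2 * r)), r; split => // x x_near.
have x_coord i : r < x ord0 i < 3 * r.
  have := le_lt_trans (normB_coord_le_edist x (const_mx (2 * r)) i) x_near.
  by rewrite mxE ltr_norml => /andP[? ?]; apply/andP; split; lra.
pose w l := x ord0 (inord l) / thin_scale l.
have w_le l : w l <= 3 * r / eps.
  rewrite /w ler_pdivrMr ?thin_scale_gt0 // /thin_scale.
  have /andP[_ x_le] := x_coord (inord l).
  case: ifP => _; last by rewrite divfK ?gt_eqF // ltW.
  rewrite mulr1 (le_trans (ltW x_le)) // ler_pdivlMr // ler_piMr //; lra.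
have -> : x = \sum_(l < k.+1) w l *: thin_vertex l.
  apply/rowP => i; rewrite summxE (bigD1 i) //= big1 ?addr0 => [|l ne_li].
    by rewrite !mxE eqxx mul1r /w inord_val divfK // gt_eqF // thin_scale_gt0.
  by rewrite !mxE (_ : (l == i :> nat) = false) ?mul0r ?mulr0 //; apply/negbTE.
apply: mem_hull_cons0_mkseq => [l _|].
  have /andP[x_gt _] := x_coord (inord l).
  by rewrite /w divr_ge0 ?(ltW (thin_scale_gt0 l)) //; lra.
have w_sum : \sum_(l < k.+1) w l <= \sum_(l < k.+1) (3 * r / eps).
  by apply: ler_sum => l _; exact: w_le.
apply: le_trans w_sum _.
rewrite sumr_const card_ord.
have -> : (3 * r / eps) *+ k.+1 = 3 / 4.
  by rewrite -mulr_natr /r; field; rewrite !gt_eqF.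
lra.
Qed.

Lemma thin_simplex_OPT_ge n :
  (2 <= n)%N -> (((n.-1)%:R^-1)%:E <= OPT (batch R n) (hull thin_simplex))%E.
Proof. exact: OPT_batch_ge thin_vertex0_coord0 segment_in_thin_simplex. Qed.

Lemma online_thin_simplex_sep alg sigma M i j :
  online_alg (hull thin_simplex) alg -> competitive (hull thin_simplex) alg sigma ->
  (i < M)%N -> (j < M)%N -> i != j ->
  (maxn i j)%:R^-1 <= sigma * (`|alg (batch R M) i ord0 ord0 - alg (batch R M) j ord0 ord0|
                               + k%:R * eps).
Proof.
move=> alg_online alg_comp lt_iM lt_jM ne_ij.
have sigma_gt0 := online_competitive_gt0 alg_online alg_comp thin_simplex_OPT_ge.
apply: le_trans (online_batch_sep alg_online alg_comp thin_simplex_OPT_ge lt_iM lt_jM ne_ij) _.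
rewrite ler_wpM2l ?(ltW sigma_gt0) //.
by apply: thin_simplex_edist_le; apply: alg_online.1; rewrite size_batch.
Qed.

Lemma competitive_thin_simplex_bound alg sigma N :
  online_alg (hull thin_simplex) alg -> competitive (hull thin_simplex) alg sigma ->
  2 * \sum_(N.+1 <= a < (2 * N).+1) a%:R^-1 <= sigma * (1 + 2 * N%:R * k%:R * eps).
Proof.
move=> alg_online alg_comp.
have sigma_gt0 := online_competitive_gt0 alg_online alg_comp thin_simplex_OPT_ge.
pose x i := alg (batch R (2 * N).+1) i ord0 ord0.
pose h a := (maxn a 1)%:R^-1 - sigma * (k%:R * eps).
have h_anti a a' : (a <= a')%N -> h a' <= h a.
  move=> le_aa'; rewrite lerD2r lef_pV2 ?posrE ?ltr0n ?leq_max ?orbT // ler_nat.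
  by rewrite geq_max !leq_max le_aa' leqnn !orbT.
have y_range i : (i <= 2 * N)%N -> 0 <= sigma * x i <= sigma.
  move=> le_i; have /andP[x_ge0 x_le1] : 0 <= x i <= 1.
    by apply: hull_coord_bound thin_simplex_coord0 _; apply: alg_online.1; rewrite size_batch.
  by rewrite mulr_ge0 ?ler_piMr // ltW.
have y_sep i j : (i <= 2 * N)%N -> (j <= 2 * N)%N -> i != j ->
    h (maxn i j) <= `|sigma * x i - sigma * x j|.
  move=> le_i le_j ne_ij.
  rewrite /h (_ : maxn (maxn i j) 1 = maxn i j); last by move: ne_ij => /eqP; lia.
  rewrite lerBlDr -mulrBr normrM gtr0_norm // -mulrDr.
  exact: online_thin_simplex_sep.
have := interval_packing h_anti y_range y_sep.
have -> : \sum_(N.+1 <= a < (2 * N).+1) h a =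
    \sum_(N.+1 <= a < (2 * N).+1) a%:R^-1 - N%:R * (sigma * (k%:R * eps)).
  rewrite sumrB sumr_const_nat (_ : ((2 * N).+1 - N.+1 = N)%N); last by lia.
  congr (_ - _); last by rewrite [RHS]mulr_natl.
  by apply: eq_big_nat => a /andP[lt_Na _]; rewrite (_ : maxn a 1 = a) //; lia.
lra.
Qed.

End ThinSimplex.

Theorem theorem9 (R : realType) (k : nat) (hk : (1 <= k)%N) (sigma : R)
  (hsigma : sigma < 2 * ln 2) :
  ~ exists alg : seq 'rV[R]_k -> instance R -> nat -> 'rV[R]_k,
      forall V : seq 'rV[R]_k, full_dim V ->
        online_alg (hull V) (alg V) /\ competitive (hull V) (alg V) sigma.
Proof.
case=> alg alg_ok; case: k hk alg alg_ok => // k _ alg alg_ok.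
have harmonic_le N : 2 * \sum_(N.+1 <= a < (2 * N).+1) a%:R^-1 <= sigma.
  apply: (ler_of_le_add_mul_small (c := sigma * (2 * N%:R * k%:R))).
  move=> eps /andP[eps_gt0 eps_le1].
  have [alg_online alg_comp] := alg_ok _ (thin_simplex_full_dim k eps_gt0 eps_le1).
  have := competitive_thin_simplex_bound eps_gt0 N alg_online alg_comp.
  by rewrite mulrDr mulr1 !mulrA.
have [n sigma_n] := ltr_add_invr hsigma.
have gap : 2 * ((2 * n.+1).+1%:R)^-1 <= n.+1%:R^-1 :> R.
  rewrite ler_pdivrMr ?ltr0n // mulrC ler_pdivlMr ?ltr0n // -natrM ler_nat.
  lia.
move: sigma_n gap (harmonic_block_ge R n.+1) (harmonic_le n.+1).
set H := \sum_(_ <= _ < _) _; set D := _^-1; set E := _^-1; lra.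
Qed.
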